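(* Let $(U,\tau_R,\rho)$ be a general ordered topological approximation space and $A\subseteq U$. Then $\underline{R}_{Inc}(A)\subseteq\underline{\alpha}_{Inc}(A)\subseteq\underline{S}_{Inc}(A)$ and $\underline{R}_{Dec}(A)\subseteq\underline{\alpha}_{Dec}(A)\subseteq\underline{S}_{Dec}(A)$.
   Context: A general ordered topological approximation space (GOTAS) is a triple $(U,\tau_R,\rho)$ where $U$ is a non-empty set, $R$ is a binary relation on $U$, $\tau_R$ is a topology on $U$ generated by $R$, and $\rho$ is a partial order on $U$. A subset $A\subseteq U$ is increasing (resp. decreasing) if whenever $a\in A$, $x\in U$ and $a\,\rho\,x$ (resp. $x\,\rho\,a$), then $x\in A$. For $A\subseteq U$: $\underline{R}_{Inc}(A)$ is the greatest subset of $A$ that is both $\tau_R$-open and increasing; $\underline{R}_{Dec}(A)$ is the greatest subset of $A$ that is $\tau_R$-open and decreasing; $\overline{R}^{Inc}(A)$ is the smallest superset of $A$ that is $\tau_R$-closed and increasing; $\overline{R}^{Dec}(A)$ is the smallest superset of $A$ that is $\tau_R$-closed and decreasing. Define $\underline{\alpha}_{Inc}(A)=A\cap\underline{R}_{Inc}(\overline{R}^{Inc}(\underline{R}_{Inc}(A)))$, $\underline{\alpha}_{Dec}(A)=A\cap\underline{R}_{Dec}(\overline{R}^{Dec}(\underline{R}_{Dec}(A)))$, $\underline{S}_{Inc}(A)=A\cap\overline{R}^{Inc}(\underline{R}_{Inc}(A))$, $\underline{S}_{Dec}(A)=A\cap\overline{R}^{Dec}(\underline{R}_{Dec}(A))$.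 *)

From Stdlib Require Import List.

Definition set (U : Type) := U -> Prop.
Definition subset {U} (A B : set U) : Prop := forall x, A x -> B x.
Definition setI {U} (A B : set U) : set U := fun x => A x /\ B x.

Definition afterset {U} (R : U -> U -> Prop) (x : U) : set U := fun y => R x y.

(* tau_R: the topology generated by the subbase {xR | x in U}:
   open sets are unions of finite intersections of after-sets
   (the empty intersection being U). *)
Definition finite_inter {U} (R : U -> U -> Prop) (l : list U) : set U :=
  fun y => forall x, In x l -> R x y.
Definition tauR_open {U} (R : U -> U -> Prop) (G : set U) : Prop :=
  forall y, G y -> exists l : list U, finite_inter R l y /\ subset (finite_inter R l) G.
Definition tauR_closed {U} (R : U -> U -> Prop) (F : set U) : Prop :=
  tauR_open R (fun x => ~ F x).

Definition partial_order {U} (rho : U -> U -> Prop) : Prop :=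
  (forall x, rho x x) /\ (forall x y, rho x y -> rho y x -> x = y) /\
  (forall x y z, rho x y -> rho y z -> rho x z).

Definition increasing {U} (rho : U -> U -> Prop) (A : set U) : Prop :=
  forall a x, A a -> rho a x -> A x.
Definition decreasing {U} (rho : U -> U -> Prop) (A : set U) : Prop :=
  forall a x, A a -> rho x a -> A x.

Definition lowInc {U} (R rho : U -> U -> Prop) (A : set U) : set U :=
  fun x => exists G, tauR_open R G /\ increasing rho G /\ subset G A /\ G x.
Definition lowDec {U} (R rho : U -> U -> Prop) (A : set U) : set U :=
  fun x => exists G, tauR_open R G /\ decreasing rho G /\ subset G A /\ G x.
Definition upInc {U} (R rho : U -> U -> Prop) (A : set U) : set U :=
  fun x => forall F, tauR_closed R F -> increasing rho F -> subset A F -> F x.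
Definition upDec {U} (R rho : U -> U -> Prop) (A : set U) : set U :=
  fun x => forall F, tauR_closed R F -> decreasing rho F -> subset A F -> F x.

Definition alphaInc {U} (R rho : U -> U -> Prop) (A : set U) : set U :=
  setI A (lowInc R rho (upInc R rho (lowInc R rho A))).
Definition alphaDec {U} (R rho : U -> U -> Prop) (A : set U) : set U :=
  setI A (lowDec R rho (upDec R rho (lowDec R rho A))).
Definition SInc {U} (R rho : U -> U -> Prop) (A : set U) : set U :=
  setI A (upInc R rho (lowInc R rho A)).
Definition SDec {U} (R rho : U -> U -> Prop) (A : set U) : set U :=
  setI A (upDec R rho (lowDec R rho A)).


(* The kernel [K] of [A] (its greatest open increasing subset) is itself open
   and increasing, and [K] lies in its own closed increasing hull [H]; hence
   [K] lies in the kernel of [H], which in turn lies in [H].  Intersecting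
   with [A] gives the chain, and the same argument works for decreasing sets. *)

(* [lowInc]/[lowDec] and [upInc]/[upDec] unfold to these two operators with
   [P] the increasing, respectively decreasing, sets. *)
Definition kernel_of {U} (R : U -> U -> Prop) (P : set U -> Prop) (A : set U) : set U :=
  fun x => exists G, tauR_open R G /\ P G /\ subset G A /\ G x.
Definition hull_of {U} (R : U -> U -> Prop) (P : set U -> Prop) (A : set U) : set U :=
  fun x => forall F, tauR_closed R F -> P F -> subset A F -> F x.

Section KernelHull.

Variables (U : Type) (R : U -> U -> Prop) (P : set U -> Prop).

Lemma kernel_of_sub (A : set U) : subset (kernel_of R P A) A.
Proof. intros x (G & _ & _ & GA & Gx). exact (GA x Gx). Qed.

Lemma hull_of_super (A : set U) : subset A (hull_of R P A).
Proof. intros x Ax F _ _ AF. exact (AF x Ax). Qed.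

Lemma kernel_of_open (A : set U) : tauR_open R (kernel_of R P A).
Proof.
  intros y (G & Gopen & PG & GA & Gy).
  destruct (Gopen y Gy) as (l & ly & lG).
  exists l; split; [exact ly |].
  intros z lz; exists G; auto.
Qed.

Lemma kernel_of_greatest (A B : set U) :
  tauR_open R B -> P B -> subset B A -> subset B (kernel_of R P A).
Proof. intros Bopen PB BA x Bx; exists B; auto. Qed.

Lemma kernel_of_sub_kernel_hull (A : set U) : P (kernel_of R P A) ->
  subset (kernel_of R P A) (kernel_of R P (hull_of R P (kernel_of R P A))).
Proof.
  intros PK; apply kernel_of_greatest; [apply kernel_of_open | exact PK |].
  apply hull_of_super.
Qed.

Lemma kernel_of_sub_alpha (A : set U) : P (kernel_of R P A) ->
  subset (kernel_of R P A)
         (setI A (kernel_of R P (hull_of R P (kernel_of R P A)))).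
Proof.
  intros PK x Kx; split.
  - exact (kernel_of_sub A x Kx).
  - exact (kernel_of_sub_kernel_hull A PK x Kx).
Qed.

Lemma alpha_sub_semi (A : set U) :
  subset (setI A (kernel_of R P (hull_of R P (kernel_of R P A))))
         (setI A (hull_of R P (kernel_of R P A))).
Proof. intros x [Ax Kx]; split; [exact Ax | exact (kernel_of_sub _ x Kx)]. Qed.

End KernelHull.

Lemma lowInc_increasing {U} (R rho : U -> U -> Prop) (A : set U) :
  increasing rho (lowInc R rho A).
Proof.
  intros a x (G & Gopen & Ginc & GA & Ga) ax.
  exists G; repeat split; auto; exact (Ginc a x Ga ax).
Qed.

Lemma lowDec_decreasing {U} (R rho : U -> U -> Prop) (A : set U) :
  decreasing rho (lowDec R rho A).
Proof.
  intros a x (G & Gopen & Gdec & GA & Ga) xa.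
  exists G; repeat split; auto; exact (Gdec a x Ga xa).
Qed.

Theorem proposition3p12 (U : Type) (u0 : U) (R rho : U -> U -> Prop)
  (Hrho : partial_order rho) (A : set U) :
  (subset (lowInc R rho A) (alphaInc R rho A) /\ subset (alphaInc R rho A) (SInc R rho A)) /\
  (subset (lowDec R rho A) (alphaDec R rho A) /\ subset (alphaDec R rho A) (SDec R rho A)).
Proof.
  split; split.
  - exact (kernel_of_sub_alpha U R (increasing rho) A (lowInc_increasing R rho A)).
  - exact (alpha_sub_semi U R (increasing rho) A).
  - exact (kernel_of_sub_alpha U R (decreasing rho) A (lowDec_decreasing R rho A)).
  - exact (alpha_sub_semi U R (decreasing rho) A).
Qed.
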